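(* Let $\Lambda=(\lambda_1,\dots,\lambda_m)\in\mathbb{R}^m$, whose pairwise distinct values are $\eta_1,\dots,\eta_r$ (with multiplicities), and let $B_\Lambda$ be the exponential B-spline $$B_\Lambda=e^{\lambda_1(\cdot)}\chi_{[0,1)}*e^{\lambda_2(\cdot)}\chi_{[0,1)}*\dots*e^{\lambda_m(\cdot)}\chi_{[0,1)}.$$ For $1\le n\le r$ let $D_n$ be the differential operator $D_nf(x)=e^{\eta_n x}\frac{d}{dx}\bigl(e^{-\eta_n x}f(x)\bigr)$. Then there exists $x_0\in\mathbb{R}$ such that $\mathrm ZB_\Lambda(\cdot,\tfrac12)$ is monotone on $[x_0+k,x_0+k+1)$ for all $k\in\mathbb{Z}$, and for each $1\le n\le r$ there exists $y_0\in\mathbb{R}$ such that $D_n\mathrm ZB_\Lambda(\cdot,\tfrac12)$ is monotone on $[y_0+k,y_0+k+1)$ for all $k\in\mathbb{Z}$.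
   Context: The Zak transform is $\mathrm Zf(x,\omega)=\sum_{k\in\mathbb{Z}} f(x+k)e^{-2\pi i k\omega}$; in particular $\mathrm ZB_\Lambda(x,\tfrac12)=\sum_{k\in\mathbb{Z}}(-1)^kB_\Lambda(x+k)$. Here $\chi_{[0,1)}$ is the indicator function of $[0,1)$ and $*$ denotes convolution on $\mathbb{R}$. *)

From Stdlib Require Import Reals List ZArith.
From Coquelicot Require Import Coquelicot.
Open Scope R_scope.

Definition chi01 (x : R) : R :=
  if Rle_dec 0 x then (if Rlt_dec x 1 then 1 else 0) else 0.

Definition expchi (lam : R) (x : R) : R := exp (lam * x) * chi01 x.

(* Exponential B-spline B_Lambda for Lambda = lam_1 :: ... :: lam_m (m >= 1):
   B_[lam] = expchi lam,
   B_(lam :: L) = expchi lam * B_L  (convolution on R; since expchi lam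
   vanishes outside [0,1), the integral over R reduces to [0,1]). *)
Fixpoint EB (L : list R) : R -> R :=
  match L with
  | nil => fun _ => 0
  | lam :: L' =>
      match L' with
      | nil => expchi lam
      | _ :: _ => fun x => RInt (fun t => expchi lam t * EB L' (x - t)) 0 1
      end
  end.

(* Zak transform at omega = 1/2:  sum_{k in Z} (-1)^k f(x+k),
   split as k >= 0 and k = -(j+1), j >= 0. *)
Definition ZakHalf (f : R -> R) (x : R) : R :=
  Series (fun k : nat => (-1) ^ k * f (x + INR k))
  + Series (fun j : nat => (-1) ^ (j + 1) * f (x - INR (j + 1))).

Definition Dop (eta : R) (f : R -> R) (x : R) : R :=
  exp (eta * x) * Derive (fun y => exp (- eta * y) * f y) x.

Definition monotone_on (f : R -> R) (a b : R) : Prop :=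
  (forall x y, a <= x -> x <= y -> y < b -> f x <= f y) \/
  (forall x y, a <= x -> x <= y -> y < b -> f y <= f x).

(* On each interval [j, j+1) the spline B_Λ is an exponential polynomial, so on [0,1) the
   function Z := ZB_Λ(·,1/2) is an alternating sum of such pieces, and Z(x+1) = -Z(x).
   Differentiating the convolution B_{μ::Λ}(y) = e^{μy} ∫_{y-1}^{y} e^{-μs} B_Λ(s) ds gives
   Z_{μ::Λ}' = μ Z_{μ::Λ} + (1 + e^μ) Z_Λ on [0,1).  For q' = μ q + r we have
   (e^{-μx} q)' = e^{-μx} r, so if r changes sign at most once on [0,1) and q(1) = -q(0)
   (which holds by continuity of the relevant derivatives of B_Λ at the knots), then q
   changes sign at most once as well.  By induction on Λ this applies to Z' and to
   (D_η Z)' = Z'' - η Z'; if the derivative changes sign at c, antiperiodicity makes the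
   function monotone on [c, c+1), hence on every [c+k, c+k+1). *)

From Stdlib Require Import Reals List ZArith Lra Lia.
From Coquelicot Require Import Coquelicot.
Open Scope R_scope.

Lemma is_derive_eq (f : R -> R) (x l l' : R) : is_derive f x l -> l = l' -> is_derive f x l'.
Proof. now intros H <-. Qed.

Lemma exp_mul_opp (a x : R) : exp (a * x) * exp (- a * x) = 1.
Proof. rewrite <- exp_plus, <- exp_0. f_equal. ring. Qed.

Lemma is_derive_exp_mul (a : R) (q : R -> R) (x l : R) :
  is_derive q x l ->
  is_derive (fun y => exp (a * y) * q y) x (exp (a * x) * (a * q x + l)).
Proof.
  intros Hq. eapply is_derive_eq.
  - apply (is_derive_mult (fun y => exp (a * y)) q);
      [auto_derive; auto | exact Hq | apply Rmult_comm].
  - simpl. unfold plus, mult; simpl. ring.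
Qed.

Lemma is_derive_RInt_upper (h : R -> R) (a x : R) :
  (forall z, continuous h z) -> is_derive (RInt h a) x (h x).
Proof.
  intros Hh. apply is_derive_RInt with (a := a); [|apply Hh].
  exists (mkposreal 1 Rlt_0_1). intros t _.
  apply RInt_correct, ex_RInt_continuous. intros; apply Hh.
Qed.

Lemma nondecreasing_of_derive_nonneg (g g' : R -> R) (a b : R) :
  (forall x, is_derive g x (g' x)) -> (forall x, a <= x < b -> 0 <= g' x) ->
  forall x y, a <= x -> x <= y -> y <= b -> g x <= g y.
Proof.
  intros Hg Hpos x y Hax Hxy Hyb.
  destruct (Req_dec x y) as [<-|Hne]; [lra|].
  destruct (MVT_cor2 g g' x y) as [z [Hz Hzxy]]; [lra|intros; apply is_derive_Reals, Hg|].
  assert (0 <= g' z * (y - x)) by (apply Rmult_le_pos; [apply Hpos|]; lra).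
  lra.
Qed.

Lemma nonincreasing_of_derive_nonpos (g g' : R -> R) (a b : R) :
  (forall x, is_derive g x (g' x)) -> (forall x, a <= x < b -> g' x <= 0) ->
  forall x y, a <= x -> x <= y -> y <= b -> g y <= g x.
Proof.
  intros Hg Hneg x y Hax Hxy Hyb.
  enough (- g x <= - g y) by lra.
  apply (nondecreasing_of_derive_nonneg (fun x => - g x) (fun x => - g' x) a b); auto.
  - intros z. apply (is_derive_opp g), Hg.
  - intros z Hz. specialize (Hneg z Hz). lra.
Qed.

Lemma nondecreasing_crossing (g : R -> R) (a b : R) :
  a <= b -> (forall x, continuous g x) ->
  (forall x y, a <= x -> x <= y -> y <= b -> g x <= g y) ->
  exists d, a <= d <= b /\ (forall x, a <= x < d -> g x <= 0) /\ (forall x, d <= x < b -> 0 <= g x).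
Proof.
  intros Hab Hc Hm.
  destruct (Rle_lt_dec 0 (g a)) as [Ha|Ha].
  { exists a. split; [lra|split; intros x Hx; [lra|]]. specialize (Hm a x). lra. }
  destruct (Rle_lt_dec (g b) 0) as [Hb|Hb].
  { exists b. split; [lra|split; intros x Hx; [|lra]]. specialize (Hm x b). lra. }
  assert (Hcont : continuity g) by (intros x; apply continuity_pt_filterlim, Hc).
  destruct (IVT g a b Hcont) as [d [Hd Hgd]]; [destruct (Req_dec a b); subst; lra|lra|lra|].
  exists d. split; [lra|split; intros x Hx; rewrite <- Hgd; apply Hm; lra].
Qed.

Definition sign_change_at (f : R -> R) (c : R) : Prop :=
  0 <= c <= 1 /\ (forall x, 0 <= x < c -> f x <= 0) /\ (forall x, c <= x < 1 -> 0 <= f x).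

Definition single_sign_change (f : R -> R) (c : R) : Prop :=
  sign_change_at f c \/ sign_change_at (fun x => - f x) c.

Lemma sign_change_at_ext (f g : R -> R) (c : R) :
  (forall x, 0 <= x < 1 -> f x = g x) -> sign_change_at f c -> sign_change_at g c.
Proof.
  intros Hfg (Hc & Hneg & Hpos).
  split; [exact Hc|split]; intros x Hx; rewrite <- Hfg by lra; auto.
Qed.

Lemma sign_change_at_mul_pos (w f : R -> R) (c : R) :
  (forall x, 0 < w x) -> sign_change_at f c -> sign_change_at (fun x => w x * f x) c.
Proof.
  intros Hw (Hc & Hneg & Hpos). split; [exact Hc|split]; intros x Hx.
  - specialize (Hneg x Hx). specialize (Hw x).
    enough (0 <= w x * - f x) by lra. apply Rmult_le_pos; lra.
  - apply Rmult_le_pos; [apply Rlt_le, Hw | auto].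
Qed.

Lemma single_sign_change_opp (f : R -> R) (c : R) :
  single_sign_change f c -> single_sign_change (fun x => - f x) c.
Proof.
  intros [H|H]; [right|left; exact H].
  apply (sign_change_at_ext f); auto. intros; simpl; ring.
Qed.

Lemma single_sign_change_ext (f g : R -> R) (c : R) :
  (forall x, 0 <= x < 1 -> f x = g x) -> single_sign_change f c -> single_sign_change g c.
Proof.
  intros Hfg [H|H]; [left|right]; eapply sign_change_at_ext; eauto.
  intros; simpl; rewrite Hfg; auto.
Qed.

Lemma single_sign_change_mul_pos (w f : R -> R) (c : R) :
  (forall x, 0 < w x) -> single_sign_change f c -> single_sign_change (fun x => w x * f x) c.
Proof.
  intros Hw [H|H]; [left|right]; apply sign_change_at_mul_pos with (w := w) in H; auto.
  apply (sign_change_at_ext (fun x => w x * - f x)); auto. intros; ring.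
Qed.

Lemma single_sign_change_scal (k : R) (f : R -> R) (c : R) :
  0 < k -> single_sign_change f c -> single_sign_change (fun x => k * f x) c.
Proof. intros Hk. apply (single_sign_change_mul_pos (fun _ => k)). auto. Qed.

Lemma single_sign_change_exp (k a : R) : single_sign_change (fun x => k * exp (a * x)) 0.
Proof.
  destruct (Rle_lt_dec 0 k); [left|right]; (split; [lra|split; intros x Hx; [lra|]]);
    pose proof (exp_pos (a * x)).
  - apply Rmult_le_pos; lra.
  - enough (0 <= - k * exp (a * x)) by lra. apply Rmult_le_pos; lra.
Qed.

Lemma sign_change_at_linear_ode (q r : R -> R) (mu c : R) :
  (forall x, is_derive q x (mu * q x + r x)) -> sign_change_at r c ->
  q 1 = - q 0 \/ c = 0 -> exists d, single_sign_change q d.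
Proof.
  intros Hq (Hc & Hneg & Hpos) Hends.
  (* [g] has the sign of [q] and decreases on [0, c], increases on [c, 1]. *)
  set (g := fun x => exp (- mu * x) * q x).
  set (g' := fun x => exp (- mu * x) * r x).
  assert (Hg : forall x, is_derive g x (g' x)).
  { intros x. eapply is_derive_eq; [apply is_derive_exp_mul, Hq|]. unfold g'. ring. }
  assert (Hgc : forall x, continuous g x)
    by (intros x; apply (ex_derive_continuous g); eexists; apply Hg).
  assert (Hdown : forall x y, 0 <= x -> x <= y -> y <= c -> g y <= g x).
  { apply (nonincreasing_of_derive_nonpos g g' 0 c Hg). intros x Hx. unfold g'.
    specialize (Hneg x Hx). pose proof (exp_pos (- mu * x)).
    enough (0 <= exp (- mu * x) * - r x) by lra. apply Rmult_le_pos; lra. }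
  assert (Hup : forall x y, c <= x -> x <= y -> y <= 1 -> g x <= g y).
  { apply (nondecreasing_of_derive_nonneg g g' c 1 Hg). intros x Hx. unfold g'.
    apply Rmult_le_pos; [apply Rlt_le, exp_pos | apply Hpos; lra]. }
  enough (Hsg : exists d, single_sign_change g d).
  { destruct Hsg as [d Hd]. exists d.
    apply (single_sign_change_ext (fun x => exp (mu * x) * g x)).
    - intros x _. unfold g. rewrite <- Rmult_assoc, exp_mul_opp. ring.
    - apply single_sign_change_mul_pos; auto. intros; apply exp_pos. }
  destruct (Rlt_le_dec (g 0) 0) as [Hg0|Hg0].
  - destruct (nondecreasing_crossing g c 1) as (d & Hd & Hle & Hge); auto; try lra.
    exists d. left. split; [lra|split; auto]. intros x Hx.
    destruct (Rlt_le_dec x c); [|apply Hle; lra].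
    specialize (Hdown 0 x). lra.
  - destruct Hends as [Hends|Hc0].
    2: { subst c. destruct (nondecreasing_crossing g 0 1) as (d & Hd & Hle & Hge); auto; try lra.
         exists d. left. split; [lra|auto]. }
    (* now [g 0 >= 0 >= g 1]: [g] crosses zero once on [0, c] and stays nonpositive after *)
    assert (Hg1 : g 1 <= 0).
    { unfold g. rewrite Hends, Rmult_1_r. pose proof (exp_pos (- mu)).
      enough (0 <= exp (- mu) * q 0) by lra.
      apply Rmult_le_pos; [lra|]. unfold g in Hg0. rewrite Rmult_0_r, exp_0 in Hg0. lra. }
    destruct (nondecreasing_crossing (fun x => - g x) 0 c) as (d & Hd & Hle & Hge); try lra.
    + intros x. apply (continuous_opp g), Hgc.
    + intros x y Hx Hxy Hy. specialize (Hdown x y Hx Hxy Hy). lra.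
    + exists d. right. split; [lra|split; auto]. intros x Hx.
      destruct (Rlt_le_dec x c); [apply Hge; lra|]. specialize (Hup x 1). simpl. lra.
Qed.

Lemma single_sign_change_linear_ode (q r : R -> R) (mu c : R) :
  (forall x, is_derive q x (mu * q x + r x)) -> single_sign_change r c ->
  q 1 = - q 0 \/ c = 0 -> exists d, single_sign_change q d.
Proof.
  intros Hq [Hr|Hr] Hends; [eapply sign_change_at_linear_ode; eauto|].
  destruct (sign_change_at_linear_ode (fun x => - q x) (fun x => - r x) mu c) as [d Hd]; auto.
  - intros x. eapply is_derive_eq; [apply (is_derive_opp q), Hq|]. simpl. unfold opp; simpl. ring.
  - destruct Hends; [left; lra|auto].
  - exists d. apply single_sign_change_opp in Hd.
    eapply single_sign_change_ext; [|exact Hd]. intros; simpl; ring.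
Qed.

Lemma single_sign_change_exp_ode (q : R -> R) (mu : R) :
  (forall x, is_derive q x (mu * q x)) -> single_sign_change q 0.
Proof.
  intros Hq.
  set (g := fun x => exp (- mu * x) * q x).
  assert (Hg : forall x, is_derive g x ((fun _ => 0) x)).
  { intros x. eapply is_derive_eq; [apply is_derive_exp_mul, Hq|ring]. }
  assert (Hconst : forall x, 0 <= x <= 1 -> g x = g 0).
  { intros x Hx. apply Rle_antisym.
    - apply (nonincreasing_of_derive_nonpos g (fun _ => 0) 0 1 Hg (fun _ _ => Rle_refl 0) 0 x);
        lra.
    - apply (nondecreasing_of_derive_nonneg g (fun _ => 0) 0 1 Hg (fun _ _ => Rle_refl 0) 0 x);
        lra. }
  apply (single_sign_change_ext (fun x => g 0 * exp (mu * x))); [|apply single_sign_change_exp].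
  intros x Hx. rewrite <- (Hconst x) by lra. unfold g.
  rewrite Rmult_comm, <- Rmult_assoc, exp_mul_opp. ring.
Qed.

Lemma monotone_on_opp (F : R -> R) (a b : R) :
  monotone_on F a b -> monotone_on (fun x => - F x) a b.
Proof.
  intros [H|H]; [right|left]; intros x y Hx Hxy Hy; specialize (H x y Hx Hxy Hy); lra.
Qed.

Lemma monotone_on_antiperiodic_shift (F : R -> R) (s a b : R) :
  (forall x, F (x + s) = - F x) -> monotone_on F a b -> monotone_on F (a + s) (b + s).
Proof.
  intros Hs Hm.
  assert (HF : forall x, F x = - F (x - s)).
  { intros x. rewrite <- Hs. f_equal. ring. }
  destruct (monotone_on_opp F a b Hm) as [H|H]; [left|right]; intros x y Hx Hxy Hy;
    rewrite (HF x), (HF y); apply H; lra.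
Qed.

Lemma monotone_on_antiperiodic (F : R -> R) (a : R) :
  (forall x, F (x + 1) = - F x) -> monotone_on F a (a + 1) ->
  forall k : Z, monotone_on F (a + IZR k) (a + IZR k + 1).
Proof.
  intros Hanti Hm.
  assert (Hanti' : forall x, F (x + -1) = - F x).
  { intros x. specialize (Hanti (x + -1)). replace (x + -1 + 1) with x in Hanti by ring. lra. }
  induction k as [|k IH|k IH] using Z.peano_ind.
  - rewrite Rplus_0_r. exact Hm.
  - rewrite succ_IZR, <- Rplus_assoc.
    apply (monotone_on_antiperiodic_shift F 1) in IH; auto.
  - rewrite <- Z.sub_1_r, minus_IZR.
    apply (monotone_on_antiperiodic_shift F (-1)) in IH; auto.
    replace (a + (IZR k - 1)) with (a + IZR k + -1) by ring.
    replace (a + IZR k + -1 + 1) with (a + IZR k + 1 + -1) by ring. exact IH.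
Qed.

Lemma nondecreasing_antiperiodic (F q r : R -> R) (c : R) :
  (forall x, F (x + 1) = - F x) -> (forall x, 0 <= x < 1 -> F x = q x) ->
  (forall x, is_derive q x (r x)) -> sign_change_at r c -> q 1 = - q 0 \/ c = 0 ->
  forall x y, c <= x -> x <= y -> y < c + 1 -> F x <= F y.
Proof.
  intros Hanti HFq Hq (Hc & Hneg & Hpos) Hends.
  assert (Hup : forall x y, c <= x -> x <= y -> y <= 1 -> q x <= q y).
  { apply (nondecreasing_of_derive_nonneg q r c 1 Hq). intros; apply Hpos; lra. }
  assert (Hdown : forall x y, 0 <= x -> x <= y -> y <= c -> q y <= q x).
  { apply (nonincreasing_of_derive_nonpos q r 0 c Hq). intros; apply Hneg; lra. }
  assert (HFq1 : forall y, 1 <= y < 2 -> F y = - q (y - 1)).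
  { intros y Hy. rewrite <- HFq by lra. rewrite <- Hanti. f_equal. ring. }
  intros x y Hx Hxy Hy.
  destruct (Rlt_le_dec y 1); [rewrite !HFq by lra; apply Hup; lra|].
  destruct (Rlt_le_dec x 1).
  - destruct Hends as [Hends|]; [|lra].
    rewrite HFq, HFq1 by lra.
    specialize (Hup x 1). specialize (Hdown 0 (y - 1)). lra.
  - rewrite !HFq1 by lra. specialize (Hdown (x - 1) (y - 1)). lra.
Qed.

Lemma monotone_on_antiperiodic_of_derive (F q r : R -> R) (c : R) :
  (forall x, F (x + 1) = - F x) -> (forall x, 0 <= x < 1 -> F x = q x) ->
  (forall x, is_derive q x (r x)) -> single_sign_change r c -> q 1 = - q 0 \/ c = 0 ->
  forall k : Z, monotone_on F (c + IZR k) (c + IZR k + 1).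
Proof.
  intros Hanti HFq Hq Hr Hends. apply monotone_on_antiperiodic; auto.
  destruct Hr as [Hr|Hr].
  - left. intros x y Hx Hxy Hy. eapply nondecreasing_antiperiodic; eauto.
  - right. intros x y Hx Hxy Hy.
    enough (- F x <= - F y) by lra.
    apply (nondecreasing_antiperiodic (fun x => - F x) (fun x => - q x) (fun x => - r x) c); auto.
    + intros z. rewrite Hanti. reflexivity.
    + intros z Hz. rewrite HFq; auto.
    + intros z. apply (is_derive_opp q), Hq.
    + destruct Hends; [left; lra|auto].
Qed.

(* If [d j] agrees with f on [j, j+1), then for y in [j, j+1) this is
   (e^{mu·}χ_[0,1) * f)(y) = e^{mu y} ∫_{y-1}^{y} e^{-mu s} f(s) ds, split at the knot [j]. *)
Definition conv_piece (mu : R) (d : Z -> R -> R) (j : Z) (y : R) : R :=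
  exp (mu * y) * (RInt (fun s => exp (- mu * s) * d j s) (IZR j) y
                  + RInt (fun s => exp (- mu * s) * d (j - 1)%Z s) (y - 1) (IZR j)).

Fixpoint conv_piece_derive (mu : R) (d : nat -> Z -> R -> R) (n : nat) : Z -> R -> R :=
  match n with
  | O => conv_piece mu (d O)
  | S n' => fun j y =>
      mu * conv_piece_derive mu d n' j y + d n' j y - exp mu * d n' (j - 1)%Z (y - 1)
  end.

(* [EB_piece L n j] is the n-th derivative of the exponential polynomial that coincides with
   [EB L] on [j, j+1). *)
Fixpoint EB_piece (L : list R) : nat -> Z -> R -> R :=
  match L with
  | nil => fun _ _ _ => 0
  | lam :: L' =>
      match L' with
      | nil => fun n j y => if Z.eq_dec j 0 then lam ^ n * exp (lam * y) else 0
      | _ :: _ => conv_piece_derive lam (EB_piece L')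
      end
  end.

Lemma continuous_exp_mul (a : R) (f : R -> R) (z : R) :
  ex_derive f z -> continuous (fun s => exp (a * s) * f s) z.
Proof. intros Hf. apply (ex_derive_continuous (fun s => exp (a * s) * f s)). auto_derive; auto. Qed.

Lemma is_derive_conv_piece (mu : R) (d : Z -> R -> R) (j : Z) (y : R) :
  (forall i z, ex_derive (d i) z) ->
  is_derive (conv_piece mu d j) y
    (mu * conv_piece mu d j y + d j y - exp mu * d (j - 1)%Z (y - 1)).
Proof.
  intros Hd.
  pose (h := fun i s => exp (- mu * s) * d i s).
  assert (Hh : forall i z, continuous (h i) z) by (intros; apply continuous_exp_mul, Hd).
  assert (Hconv : forall z, conv_piece mu d j z
            = exp (mu * z) * (RInt (h j) (IZR j) z - RInt (h (j - 1)%Z) (IZR j) (z - 1))).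
  { intros z. unfold conv_piece. fold (h j) (h (j - 1)%Z).
    rewrite <- (opp_RInt_swap (h (j - 1)%Z)); [reflexivity|].
    apply ex_RInt_continuous. intros; apply Hh. }
  assert (Hshift : exp (mu * y) * exp (- mu * (y - 1)) = exp mu).
  { rewrite <- exp_plus. f_equal. ring. }
  eapply is_derive_ext; [intros; symmetry; apply Hconv|].
  eapply is_derive_eq.
  - apply is_derive_exp_mul,
      (is_derive_minus (RInt (h j) (IZR j)) (fun z => RInt (h (j - 1)%Z) (IZR j) (z - 1))).
    + apply is_derive_RInt_upper, Hh.
    + apply (is_derive_comp (RInt (h (j - 1)%Z) (IZR j)) (fun z => z - 1)).
      * apply is_derive_RInt_upper, Hh.
      * auto_derive; auto.
  - rewrite Hconv. unfold minus, plus, opp, scal, h; simpl; unfold mult; simpl.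
    replace (exp (- mu * y)) with (/ exp (mu * y)) by (rewrite <- exp_Ropp; f_equal; ring).
    rewrite <- Hshift. field. apply Rgt_not_eq, exp_pos.
Qed.

Lemma is_derive_EB_piece (L : list R) (n : nat) (j : Z) (y : R) :
  is_derive (EB_piece L n j) y (EB_piece L (S n) j y).
Proof.
  revert n j y. induction L as [|lam [|a L] IH]; intros n j y.
  - apply (is_derive_const 0).
  - simpl. destruct (Z.eq_dec j 0); [|apply (is_derive_const 0)].
    auto_derive; auto. ring.
  - change (EB_piece (lam :: a :: L)) with (conv_piece_derive lam (EB_piece (a :: L))).
    set (d := EB_piece (a :: L)) in *.
    revert j y. induction n as [|n IHn]; intros j y.
    + apply is_derive_conv_piece. intros; eexists; apply IH.
    + cbn [conv_piece_derive]. eapply is_derive_eq.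
      * apply (is_derive_minus (fun z => lam * conv_piece_derive lam d n j z + d n j z)
                               (fun z => exp lam * d n (j - 1)%Z (z - 1))).
        -- apply (is_derive_plus (fun z => lam * conv_piece_derive lam d n j z)).
           ++ apply is_derive_scal, IHn.
           ++ apply IH.
        -- apply is_derive_scal, (is_derive_comp (d n (j - 1)%Z) (fun z => z - 1)); [apply IH|].
           auto_derive; auto.
      * simpl. unfold minus, plus, opp, scal, mult; simpl. unfold mult; simpl. ring.
Qed.

Lemma RInt_eq_0 (f : R -> R) (a b : R) :
  (forall x, Rmin a b < x < Rmax a b -> f x = 0) -> RInt f a b = 0.
Proof.
  intros Hf. rewrite (RInt_ext f (fun _ => 0)), RInt_const by exact Hf.
  unfold scal; simpl; unfold mult; simpl. ring.
Qed.

Lemma EB_piece_out_of_range (L : list R) (n : nat) (j : Z) (y : R) :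
  (j < 0 \/ Z.of_nat (length L) <= j)%Z -> EB_piece L n j y = 0.
Proof.
  revert n j y. induction L as [|lam [|a L] IH]; intros n j y Hj; [reflexivity| |].
  - simpl in Hj. simpl. destruct (Z.eq_dec j 0); [lia|reflexivity].
  - change (EB_piece (lam :: a :: L)) with (conv_piece_derive lam (EB_piece (a :: L))).
    assert (Hout : forall m i z, (i < 0 \/ Z.of_nat (length (a :: L)) <= i)%Z ->
                     EB_piece (a :: L) m i z = 0) by exact IH.
    simpl length in Hj, Hout. revert j y Hj. induction n as [|n IHn]; intros j y Hj.
    + cbn [conv_piece_derive]. unfold conv_piece.
      rewrite !RInt_eq_0; [ring| |]; intros s _; rewrite Hout by lia; ring.
    + cbn [conv_piece_derive]. rewrite IHn, !Hout by lia. ring.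
Qed.

Lemma EB_piece_knot (L : list R) (n : nat) (j : Z) :
  (n + 2 <= length L)%nat -> EB_piece L n j (IZR j) = EB_piece L n (j - 1)%Z (IZR j).
Proof.
  revert n j. induction L as [|lam [|a L] IH]; intros n j Hn; simpl in Hn; try lia.
  change (EB_piece (lam :: a :: L)) with (conv_piece_derive lam (EB_piece (a :: L))).
  revert j. induction n as [|n IHn]; intros j.
  - cbn [conv_piece_derive]. unfold conv_piece.
    rewrite minus_IZR, !RInt_point. unfold zero; simpl. ring.
  - cbn [conv_piece_derive]. rewrite IHn by lia.
    replace (IZR j - 1) with (IZR (j - 1)) by (rewrite minus_IZR; ring).
    rewrite (IH n j), (IH n (j - 1)%Z) by (simpl; lia). reflexivity.
Qed.

Lemma RInt_exp_mul_reflect (mu y a b : R) (h : R -> R) :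
  (forall z, ex_derive h z) ->
  RInt (fun t => exp (mu * t) * h (y - t)) a b
  = exp (mu * y) * RInt (fun s => exp (- mu * s) * h s) (y - b) (y - a).
Proof.
  intros Hh.
  set (G := fun s => exp (- mu * s) * h s).
  assert (HG : forall a b, ex_RInt G a b).
  { intros. apply (@ex_RInt_continuous R_CompleteNormedModule).
    intros; apply continuous_exp_mul, Hh. }
  assert (HGr : forall a b, ex_RInt (fun t => G (-1 * t + y)) a b).
  { intros. apply (@ex_RInt_continuous R_CompleteNormedModule). intros z _.
    apply (ex_derive_continuous (fun t => G (-1 * t + y))). unfold G. auto_derive. apply Hh. }
  rewrite (RInt_ext _ (fun t => scal (exp (mu * y)) (G (-1 * t + y)))).
  - rewrite (@RInt_scal R_CompleteNormedModule) by auto.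
    unfold scal; simpl; unfold mult; simpl. f_equal.
    rewrite <- (opp_RInt_swap G) by auto.
    replace (y - a) with (-1 * a + y) by ring. replace (y - b) with (-1 * b + y) by ring.
    rewrite <- RInt_comp_lin by auto.
    rewrite (@RInt_scal R_CompleteNormedModule) by auto.
    unfold scal, opp; simpl; unfold mult; simpl.
    match goal with |- ?u = ?v => change (@eq R u v) end. cbn. ring.
  - intros t _. unfold G, scal; simpl; unfold mult; simpl.
    replace (-1 * t + y) with (y - t) by ring.
    rewrite <- Rmult_assoc, <- exp_plus. f_equal. f_equal. ring.
Qed.

Lemma conv_expchi_piecewise (mu : R) (f : R -> R) (d : Z -> R -> R) (j : Z) (y : R) :
  (forall i z, ex_derive (d i) z) ->
  (forall i z, IZR i <= z < IZR i + 1 -> f z = d i z) ->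
  IZR j <= y < IZR j + 1 ->
  RInt (fun t => expchi mu t * f (y - t)) 0 1 = conv_piece mu d j y.
Proof.
  intros Hd Hf Hy.
  set (t0 := y - IZR j).
  set (F := fun t => expchi mu t * f (y - t)).
  set (f1 := fun t => exp (mu * t) * d j (y - t)).
  set (f2 := fun t => exp (mu * t) * d (j - 1)%Z (y - t)).
  assert (Hex : forall i a b, ex_RInt (fun t => exp (mu * t) * d i (y - t)) a b).
  { intros. apply (@ex_RInt_continuous R_CompleteNormedModule). intros z _.
    apply (ex_derive_continuous (fun t => exp (mu * t) * d i (y - t))). auto_derive. apply Hd. }
  (* on [0, t0] the argument [y - t] stays in [j, j+1); on [t0, 1] it is in [j-1, j) *)
  assert (E1 : forall t, Rmin 0 t0 < t < Rmax 0 t0 -> f1 t = F t).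
  { intros t Ht. rewrite Rmin_left, Rmax_right in Ht by (unfold t0; lra).
    unfold F, f1, expchi, chi01, t0 in *.
    destruct (Rle_dec 0 t); [|lra]. destruct (Rlt_dec t 1); [|lra].
    rewrite (Hf j) by lra. ring. }
  assert (E2 : forall t, Rmin t0 1 < t < Rmax t0 1 -> f2 t = F t).
  { intros t Ht. rewrite Rmin_left, Rmax_right in Ht by (unfold t0; lra).
    unfold F, f2, expchi, chi01, t0 in *.
    destruct (Rle_dec 0 t); [|lra]. destruct (Rlt_dec t 1); [|lra].
    rewrite (Hf (j - 1)%Z) by (rewrite minus_IZR; lra). ring. }
  rewrite <- (RInt_Chasles F 0 t0 1) by (eapply ex_RInt_ext; [apply E1 || apply E2|apply Hex]).
  rewrite <- (RInt_ext f1 F 0 t0 E1), <- (RInt_ext f2 F t0 1 E2).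
  unfold f1, f2. rewrite !RInt_exp_mul_reflect by auto.
  unfold conv_piece, plus, t0; simpl. replace (y - (y - IZR j)) with (IZR j) by ring.
  rewrite Rminus_0_r. ring.
Qed.

Lemma chi01_on_unit_interval (j : Z) (y : R) :
  IZR j <= y < IZR j + 1 -> chi01 y = if Z.eq_dec j 0 then 1 else 0.
Proof.
  intros Hy. unfold chi01. destruct (Z.eq_dec j 0) as [Hj|Hj].
  - subst j. simpl in Hy. destruct (Rle_dec 0 y), (Rlt_dec y 1); lra.
  - assert (IZR j <= -1 \/ 1 <= IZR j)
      by (destruct (Z_lt_le_dec j 0); [left|right]; apply IZR_le; lia).
    destruct (Rle_dec 0 y), (Rlt_dec y 1); lra.
Qed.

Lemma EB_eq_piece (L : list R) (j : Z) (y : R) :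
  L <> nil -> IZR j <= y < IZR j + 1 -> EB L y = EB_piece L 0 j y.
Proof.
  revert j y. induction L as [|lam [|a L] IH]; intros j y HL Hy; [congruence| |].
  - simpl. unfold expchi. rewrite (chi01_on_unit_interval j y Hy).
    destruct (Z.eq_dec j 0); ring.
  - apply (conv_expchi_piecewise lam (EB (a :: L)) (EB_piece (a :: L) 0)); auto.
    + intros; eexists; apply is_derive_EB_piece.
    + intros i z Hz. apply IH; [congruence|auto].
Qed.

Lemma EB_out_of_support (L : list R) (y : R) :
  L <> nil -> y < 0 \/ INR (length L) <= y -> EB L y = 0.
Proof.
  intros HL Hy. destruct (archimed y) as [Hup Hup'].
  rewrite (EB_eq_piece L (up y - 1)%Z y HL) by (rewrite minus_IZR; lra).
  apply EB_piece_out_of_range. rewrite INR_IZR_INZ in Hy.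
  destruct Hy as [Hy|Hy]; [left|right].
  - apply lt_IZR. rewrite minus_IZR. lra.
  - enough (Z.of_nat (length L) < up y)%Z by lia. apply lt_IZR. lra.
Qed.

(* The n-th derivative of [ZakHalf (EB L)] on [0,1); the last index [length L] contributes 0. *)
Definition zak_piece (L : list R) (n : nat) (x : R) : R :=
  sum_f_R0 (fun i => (-1) ^ i * EB_piece L n (Z.of_nat i) (x + INR i)) (length L).

Lemma is_derive_sum_f_R0 (f : nat -> R -> R) (f' : nat -> R) (N : nat) (x : R) :
  (forall i, is_derive (f i) x (f' i)) ->
  is_derive (fun y => sum_f_R0 (fun i => f i y) N) x (sum_f_R0 f' N).
Proof.
  intros Hf. induction N as [|N IH]; [apply Hf|].
  apply (is_derive_plus (fun y => sum_f_R0 (fun i => f i y) N)); auto.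
Qed.

Lemma is_derive_zak_piece (L : list R) (n : nat) (x : R) :
  is_derive (zak_piece L n) x (zak_piece L (S n) x).
Proof.
  apply (is_derive_sum_f_R0 (fun i y => (-1) ^ i * EB_piece L n (Z.of_nat i) (y + INR i))).
  intros i. apply is_derive_scal.
  eapply is_derive_eq.
  - apply (is_derive_comp (EB_piece L n (Z.of_nat i)) (fun y => y + INR i));
      [apply is_derive_EB_piece|auto_derive; auto].
  - simpl. unfold scal; simpl; unfold mult; simpl. ring.
Qed.

Lemma zak_piece_singleton (lam : R) (n : nat) (x : R) :
  zak_piece (lam :: nil) n x = lam ^ n * exp (lam * x).
Proof. unfold zak_piece. simpl. rewrite Rplus_0_r. ring. Qed.

Lemma zak_piece_cons (mu : R) (L : list R) (n : nat) (x : R) :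
  L <> nil ->
  zak_piece (mu :: L) (S n) x = mu * zak_piece (mu :: L) n x + (1 + exp mu) * zak_piece L n x.
Proof.
  intros HL. destruct L as [|a L']; [congruence|]. set (L := a :: L').
  set (m := length L). set (term := fun i => (-1) ^ i * EB_piece L n (Z.of_nat i) (x + INR i)).
  assert (Hlast : sum_f_R0 term (S m) = zak_piece L n x).
  { rewrite tech5. unfold term. rewrite EB_piece_out_of_range by (right; unfold m; lia).
    unfold zak_piece. fold m. ring. }
  (* the terms coming from the left neighbour [j - 1] form the same sum, shifted by one *)
  assert (Hshift :
    sum_f_R0 (fun i => (-1) ^ i * EB_piece L n (Z.of_nat i - 1) (x + INR i - 1)) (S m)
    = - zak_piece L n x).
  { rewrite decomp_sum by lia. simpl pred.
    rewrite EB_piece_out_of_range by (left; lia).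
    rewrite (sum_eq _ (fun i => term i * -1)).
    - rewrite <- scal_sum. unfold zak_piece, term. fold m. ring.
    - intros i _. unfold term. rewrite S_INR. simpl pow.
      replace (Z.of_nat (S i) - 1)%Z with (Z.of_nat i) by lia.
      replace (x + (INR i + 1) - 1) with (x + INR i) by ring. ring. }
  unfold zak_piece at 1 2. change (length (mu :: L)) with (S m).
  change (EB_piece (mu :: L) (S n)) with (fun j y =>
    mu * EB_piece (mu :: L) n j y + EB_piece L n j y - exp mu * EB_piece L n (j - 1)%Z (y - 1)).
  cbv beta.
  rewrite (sum_eq _ (fun i =>
      ((-1) ^ i * EB_piece (mu :: L) n (Z.of_nat i) (x + INR i)) * mu + term i
      - ((-1) ^ i * EB_piece L n (Z.of_nat i - 1) (x + INR i - 1)) * exp mu))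
    by (intros; unfold term; ring).
  rewrite minus_sum, plus_sum, <- !scal_sum, Hlast, Hshift. ring.
Qed.

Lemma zak_piece_antiperiodic (L : list R) (n : nat) :
  (n + 2 <= length L)%nat -> zak_piece L n 1 = - zak_piece L n 0.
Proof.
  intros Hn. unfold zak_piece. destruct (length L) as [|m] eqn:Hm; [lia|].
  rewrite tech5, (EB_piece_out_of_range L n (Z.of_nat (S m))) by (right; lia).
  rewrite (decomp_sum (fun i => (-1) ^ i * EB_piece L n (Z.of_nat i) (0 + INR i))) by lia.
  simpl pred.
  (* continuity at the knots turns the value at [0 + i] into the left neighbour's value
     at [1 + (i - 1)] *)
  assert (Hknot : forall i,
    EB_piece L n (Z.of_nat i) (INR i) = EB_piece L n (Z.of_nat i - 1) (INR i)).
  { intros i. rewrite INR_IZR_INZ. apply EB_piece_knot. lia. }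
  rewrite Rplus_0_l, Hknot, EB_piece_out_of_range by (left; lia).
  rewrite (sum_eq (fun i => (-1) ^ S i * EB_piece L n (Z.of_nat (S i)) (0 + INR (S i)))
                  (fun i => (-1) ^ i * EB_piece L n (Z.of_nat i) (1 + INR i) * -1)).
  - rewrite <- scal_sum. ring.
  - intros i _. rewrite Rplus_0_l, Hknot, S_INR. simpl pow.
    replace (Z.of_nat (S i) - 1)%Z with (Z.of_nat i) by lia.
    replace (INR i + 1) with (1 + INR i) by ring. ring.
Qed.

Lemma is_series_finite_support (a : nat -> R) (N : nat) :
  (forall n, (N < n)%nat -> a n = 0) -> is_series a (sum_f_R0 a N).
Proof.
  intros Ha. apply is_series_Reals. intros eps Heps. exists N. intros n Hn.
  replace (sum_f_R0 a n) with (sum_f_R0 a N).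
  - unfold R_dist. rewrite Rminus_diag, Rabs_R0. exact Heps.
  - induction Hn as [|n Hn IH]; [reflexivity|]. simpl. rewrite <- IH, Ha by lia. ring.
Qed.

Lemma ZakHalf_antiperiodic (f : R -> R) (M : R) :
  (forall y, y < 0 \/ M <= y -> f y = 0) -> forall x, ZakHalf f (x + 1) = - ZakHalf f x.
Proof.
  intros Hf x. unfold ZakHalf.
  assert (Hright : forall z, ex_series (fun k => (-1) ^ k * f (z + INR k))).
  { intros z. destruct (INR_unbounded (M - z)) as [N HN].
    eexists. apply (is_series_finite_support _ N). intros n Hn.
    apply lt_INR in Hn. rewrite Hf by lra. ring. }
  assert (Hleft : forall z, ex_series (fun j => (-1) ^ (j + 1) * f (z - INR (j + 1)))).
  { intros z. destruct (INR_unbounded z) as [N HN].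
    eexists. apply (is_series_finite_support _ N). intros n Hn.
    apply lt_INR in Hn. rewrite Hf; [ring|]. rewrite plus_INR. simpl. lra. }
  (* the term [k = 0] moves from the right-hand series to the left-hand one *)
  rewrite (Series_incr_1 _ (Hright x)), (Series_incr_1 _ (Hleft (x + 1))).
  rewrite (Series_ext (fun k => (-1) ^ S k * f (x + INR (S k)))
                      (fun k => -1 * ((-1) ^ k * f (x + 1 + INR k)))).
  2: { intros k. rewrite S_INR. simpl pow.
       replace (x + (INR k + 1)) with (x + 1 + INR k) by ring. ring. }
  rewrite (Series_ext (fun k => (-1) ^ (S k + 1) * f (x + 1 - INR (S k + 1)))
                      (fun k => -1 * ((-1) ^ (k + 1) * f (x - INR (k + 1))))).
  2: { intros k. rewrite !plus_INR, S_INR. simpl pow.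
       replace (x + 1 - (INR k + 1 + INR 1)) with (x - (INR k + INR 1)) by ring. ring. }
  rewrite !Series_scal_l. simpl. replace (x + 1 - 1) with x by ring. rewrite Rplus_0_r. ring.
Qed.

Lemma ZakHalf_EB_on_unit (L : list R) (x : R) :
  L <> nil -> 0 <= x < 1 -> ZakHalf (EB L) x = zak_piece L 0 x.
Proof.
  intros HL Hx. unfold ZakHalf.
  assert (Hright : forall n, (length L < n)%nat -> (-1) ^ n * EB L (x + INR n) = 0).
  { intros n Hn. apply lt_INR in Hn. rewrite EB_out_of_support by (auto; right; lra). ring. }
  assert (Hleft : forall n, (0 < n)%nat -> (-1) ^ (n + 1) * EB L (x - INR (n + 1)) = 0).
  { intros n _. rewrite EB_out_of_support; [ring|auto|left].
    rewrite plus_INR. pose proof (pos_INR n). simpl. lra. }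
  rewrite (is_series_unique _ _ (is_series_finite_support _ _ Hright)).
  rewrite (is_series_unique _ _ (is_series_finite_support _ _ Hleft)).
  simpl. rewrite EB_out_of_support by (auto; left; lra). rewrite Rmult_0_r, Rplus_0_r.
  apply sum_eq. intros i _. f_equal. apply EB_eq_piece; auto.
  rewrite <- INR_IZR_INZ. lra.
Qed.

Lemma Derive_shift (f : R -> R) (x s : R) : Derive f (x + s) = Derive (fun y => f (y + s)) x.
Proof.
  unfold Derive. f_equal. apply Lim_ext. intros h.
  replace (x + s + h) with (x + h + s) by ring. reflexivity.
Qed.

(* Coquelicot's [Derive f x] is the limit of difference quotients along [x + 1/(n+1)],
   so it only sees the values of [f] to the right of [x]. *)
Lemma Derive_eq_right (f g : R -> R) (x eps l : R) :
  0 < eps -> (forall y, x <= y < x + eps -> f y = g y) -> is_derive g x l -> Derive f x = l.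
Proof.
  intros Heps Hfg Hg. rewrite <- (is_derive_unique g x l Hg).
  unfold Derive, Lim. f_equal. apply Lim_seq_ext_loc.
  destruct (INR_unbounded (/ eps)) as [N HN]. exists N. intros n Hn.
  apply le_INR in Hn. simpl. pose proof (pos_INR n).
  assert (Hstep : 0 < / (INR n + 1) < eps).
  { split; [apply Rinv_0_lt_compat; lra|].
    rewrite <- (Rinv_inv eps). apply Rinv_lt_contravar; [|lra].
    apply Rmult_lt_0_compat; [apply Rinv_0_lt_compat|]; lra. }
  rewrite !Hfg by lra. reflexivity.
Qed.

Lemma Dop_antiperiodic (eta : R) (F : R -> R) :
  (forall x, F (x + 1) = - F x) -> forall x, Dop eta F (x + 1) = - Dop eta F x.
Proof.
  intros Hanti x. unfold Dop. rewrite Derive_shift.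
  rewrite (Derive_ext _ (fun y => - exp (- eta) * (exp (- eta * y) * F y))), Derive_scal.
  - assert (He : exp (eta * (x + 1)) * exp (- eta) = exp (eta * x))
      by (rewrite <- exp_plus; f_equal; ring).
    rewrite <- He. ring.
  - intros y. rewrite Hanti. replace (- eta * (y + 1)) with (- eta * y + - eta) by ring.
    rewrite exp_plus. ring.
Qed.

Lemma Dop_ZakHalf_EB_on_unit (L : list R) (eta x : R) :
  L <> nil -> 0 <= x < 1 ->
  Dop eta (ZakHalf (EB L)) x = zak_piece L 1 x - eta * zak_piece L 0 x.
Proof.
  intros HL Hx. unfold Dop.
  rewrite (Derive_eq_right _ (fun y => exp (- eta * y) * zak_piece L 0 y) x (1 - x)
             (exp (- eta * x) * (- eta * zak_piece L 0 x + zak_piece L 1 x))).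
  - rewrite <- Rmult_assoc, exp_mul_opp. ring.
  - lra.
  - intros y Hy. rewrite ZakHalf_EB_on_unit by (auto; lra). reflexivity.
  - apply is_derive_exp_mul, is_derive_zak_piece.
Qed.

Lemma one_plus_exp_pos (mu : R) : 0 < 1 + exp mu.
Proof. pose proof (exp_pos mu). lra. Qed.

(* The disjunct on [length L] provides the end condition [q 1 = - q 0] of
   [single_sign_change_linear_ode] through [zak_piece_antiperiodic]. *)
Lemma zak_piece_1_single_sign_change (L : list R) :
  L <> nil -> exists c, single_sign_change (zak_piece L 1) c /\ ((2 <= length L)%nat \/ c = 0).
Proof.
  induction L as [|mu [|a L] IH]; intros HL; [congruence| |].
  - exists 0. split; [|right; reflexivity].
    apply (single_sign_change_ext (fun x => mu * exp (mu * x))); [|apply single_sign_change_exp].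
    intros. rewrite zak_piece_singleton. ring.
  - destruct IH as (c & Hc & Hlen); [congruence|].
    destruct (single_sign_change_linear_ode (zak_piece (mu :: a :: L) 1)
                (fun x => (1 + exp mu) * zak_piece (a :: L) 1 x) mu c) as [d Hd].
    + intros x. rewrite <- zak_piece_cons by congruence. apply is_derive_zak_piece.
    + apply single_sign_change_scal; [apply one_plus_exp_pos|exact Hc].
    + destruct Hlen; [left; apply zak_piece_antiperiodic; simpl in *; lia|right; auto].
    + exists d. split; [exact Hd|left; simpl; lia].
Qed.

Lemma Dop_zak_piece_single_sign_change (L : list R) (eta : R) :
  In eta L -> exists c,
    single_sign_change (fun x => zak_piece L 2 x - eta * zak_piece L 1 x) c
    /\ ((3 <= length L)%nat \/ c = 0).
Proof.
  induction L as [|mu [|a L] IH]; intros Hin; [destruct Hin| |].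
  - destruct Hin as [->|[]]. exists 0. split; [|right; reflexivity].
    apply (single_sign_change_ext (fun x => 0 * exp (eta * x))); [|apply single_sign_change_exp].
    intros. rewrite !zak_piece_singleton. ring.
  - assert (Hcons : forall n x, zak_piece (mu :: a :: L) (S n) x
              = mu * zak_piece (mu :: a :: L) n x + (1 + exp mu) * zak_piece (a :: L) n x)
      by (intros; apply zak_piece_cons; congruence).
    destruct Hin as [->|Hin].
    + destruct (zak_piece_1_single_sign_change (a :: L)) as (c & Hc & Hlen); [congruence|].
      exists c. split.
      * apply (single_sign_change_ext (fun x => (1 + exp eta) * zak_piece (a :: L) 1 x)).
        -- intros. rewrite Hcons. ring.
        -- apply single_sign_change_scal; [apply one_plus_exp_pos|exact Hc].
      * destruct Hlen; [left; simpl in *; lia|right; auto].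
    + set (q := fun x => zak_piece (mu :: a :: L) 2 x - eta * zak_piece (mu :: a :: L) 1 x).
      set (r := fun x => zak_piece (a :: L) 2 x - eta * zak_piece (a :: L) 1 x).
      assert (Hq : forall x, is_derive q x (mu * q x + (1 + exp mu) * r x)).
      { intros x. eapply is_derive_eq.
        - apply (is_derive_minus _ (fun x => eta * zak_piece (mu :: a :: L) 1 x));
            [|apply is_derive_scal]; apply is_derive_zak_piece.
        - unfold q, r. simpl. unfold minus, plus, opp, scal, mult; simpl. rewrite !Hcons. ring. }
      destruct L as [|b L].
      * (* here [r] vanishes identically *)
        destruct Hin as [->|[]]. exists 0. split; [|right; reflexivity].
        apply (single_sign_change_exp_ode q mu). intros x.
        eapply is_derive_eq; [apply Hq|]. unfold r. rewrite !zak_piece_singleton. ring.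
      * destruct (IH Hin) as (c & Hc & Hlen).
        destruct (single_sign_change_linear_ode q (fun x => (1 + exp mu) * r x) mu c Hq) as [d Hd].
        -- apply single_sign_change_scal; [apply one_plus_exp_pos|exact Hc].
        -- destruct Hlen; [left|right; auto].
           unfold q. rewrite !zak_piece_antiperiodic by (simpl in *; lia). ring.
        -- exists d. split; [exact Hd|left; simpl; lia].
Qed.

Theorem mainTheorem7 (L : list R) (HL : L <> nil) :
  (exists x0 : R, forall k : Z,
      monotone_on (ZakHalf (EB L)) (x0 + IZR k) (x0 + IZR k + 1)) /\
  (forall eta : R, In eta L ->
     exists y0 : R, forall k : Z,
       monotone_on (Dop eta (ZakHalf (EB L))) (y0 + IZR k) (y0 + IZR k + 1)).
Proof.
  assert (Hanti : forall x, ZakHalf (EB L) (x + 1) = - ZakHalf (EB L) x).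
  { apply (ZakHalf_antiperiodic _ (INR (length L))). intros; apply EB_out_of_support; auto. }
  split.
  - destruct (zak_piece_1_single_sign_change L HL) as (c & Hc & Hlen). exists c.
    apply (monotone_on_antiperiodic_of_derive _ (zak_piece L 0) (zak_piece L 1)); auto.
    + intros; apply ZakHalf_EB_on_unit; auto.
    + intros; apply is_derive_zak_piece.
    + destruct Hlen; [left; apply zak_piece_antiperiodic; lia|right; auto].
  - intros eta Hin. destruct (Dop_zak_piece_single_sign_change L eta Hin) as (c & Hc & Hlen).
    exists c.
    apply (monotone_on_antiperiodic_of_derive _ (fun x => zak_piece L 1 x - eta * zak_piece L 0 x)
             (fun x => zak_piece L 2 x - eta * zak_piece L 1 x)); auto.
    + apply Dop_antiperiodic, Hanti.
    + intros; apply Dop_ZakHalf_EB_on_unit; auto.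
    + intros x. apply (is_derive_minus (zak_piece L 1) (fun x => eta * zak_piece L 0 x));
        [|apply is_derive_scal]; apply is_derive_zak_piece.
    + destruct Hlen; [left|right; auto]. rewrite !zak_piece_antiperiodic by lia. ring.
Qed.
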